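(* For every term $t\in\Lambda^\infty$ there exists $s\in\Lambda^\infty$ with $t\to^\infty_N s$.
   Context: Fix an infinite set $V$ of variables and a set $C$ of constants with $V\cap C=\emptyset$, containing a distinguished constant $\bot$. $\Lambda^\infty$ is the set of infinitary lambda-terms: all finite and infinite terms generated coinductively by $t ::= c\mid x\mid t\,t\mid\lambda x.t$, identified up to $\alpha$-equivalence; $s[t/x]$ is capture-avoiding substitution; $\equiv$ is identity; an atom is a variable or constant. $\to_\beta$ is the compatible closure of $\{((\lambda x.s)t,s[t/x])\}$ (least relation containing these pairs and closed under $s\to s'\Rightarrow st\to s't, ts\to ts', \lambda x.s\to\lambda x.s'$), $\to^*_\beta$ its reflexive-transitive closure. A term is in head normal form (hnf) if it is $\lambda x_1\ldots x_m.\,a\,t_1\ldots t_n$ ($m,n\ge0$, $a$ an atom, $a\not\equiv\bot$); $t$ has a hnf if $t\to^*_\beta t'$ for some $t'$ in hnf. Weak head contraction $\to_w$ is the least relation with $(\lambda x.s)t\to_w s[t/x]$ and $s\to_w s'\Rightarrow st\to_w s't$; head contraction $\to_h$ is the least relation with $s\to_w s'\Rightarrow s\to_h s'$ and $s\to_h s'\Rightarrow\lambda x.s\to_h\lambda x.s'$; $\to^*_h$ is its reflexive-transitive closure. The relation $\to^\infty_N$ is the greatest relation such that whenever $t\to^\infty_N u$, either (i) $u\equiv\bot$ and $t$ has no hnf, or (ii) $u\equiv\lambda x_1\ldots x_n.\,a\,t_1'\ldots t_m'$ with $a$ an atom, $a\not\equiv\bot$, and there are $t_1,\ldots,t_m$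 with $t\to^*_h\lambda x_1\ldots x_n.\,a\,t_1\ldots t_m$ and $t_i\to^\infty_N t_i'$ for $i=1,\ldots,m$. *)

(* Infinitary lambda-terms, represented with de Bruijn indices
   (so alpha-equivalence classes are represented canonically). *)
From Stdlib Require Import List Relations Arith.
Import ListNotations.

Set Implicit Arguments.

Section InfLambda.

Variable C : Type.
Variable bot : C.

CoInductive term : Type :=
| Var : nat -> term
| Cst : C -> term
| App : term -> term -> term
| Lam : term -> term.

CoFixpoint lift (k : nat) (t : term) : term :=
  match t with
  | Var n => Var (if k <=? n then S n else n)
  | Cst c => Cst c
  | App t1 t2 => App (lift k t1) (lift k t2)
  | Lam t1 => Lam (lift (S k) t1)
  end.

Definition up (sigma : nat -> term) : nat -> term :=
  fun n => match n with 0 => Var 0 | S m => lift 0 (sigma m) end.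

CoFixpoint subst (sigma : nat -> term) (t : term) : term :=
  match t with
  | Var n => sigma n
  | Cst c => Cst c
  | App t1 t2 => App (subst sigma t1) (subst sigma t2)
  | Lam t1 => Lam (subst (up sigma) t1)
  end.

(* s[u/x] where x is the variable bound by the lambda, i.e. index 0 *)
Definition subst0 (u : term) (s : term) : term :=
  subst (fun n => match n with 0 => u | S m => Var m end) s.

Definition is_atom (a : term) : Prop :=
  match a with Var _ => True | Cst _ => True | _ => False end.

Fixpoint lams (n : nat) (t : term) : term :=
  match n with 0 => t | S m => Lam (lams m t) end.

Fixpoint apps (a : term) (ts : list term) : term :=
  match ts with [] => a | u :: us => apps (App a u) us end.

Inductive beta : term -> term -> Prop :=
| beta_redex s u : beta (App (Lam s) u) (subst0 u s)
| beta_appl s s' u : beta s s' -> beta (App s u) (App s' u)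
| beta_appr s u u' : beta u u' -> beta (App s u) (App s u')
| beta_lam s s' : beta s s' -> beta (Lam s) (Lam s').

Definition beta_star := clos_refl_trans term beta.

Inductive spine : term -> Prop :=
| spine_var n : spine (Var n)
| spine_cst c : c <> bot -> spine (Cst c)
| spine_app t u : spine t -> spine (App t u).

Inductive hnf : term -> Prop :=
| hnf_spine t : spine t -> hnf t
| hnf_lam t : hnf t -> hnf (Lam t).

Definition has_hnf (t : term) : Prop := exists t', beta_star t t' /\ hnf t'.

Inductive wstep : term -> term -> Prop :=
| wstep_redex s u : wstep (App (Lam s) u) (subst0 u s)
| wstep_app s s' u : wstep s s' -> wstep (App s u) (App s' u).

Inductive hstep : term -> term -> Prop :=
| hstep_w s s' : wstep s s' -> hstep s s'
| hstep_lam s s' : hstep s s' -> hstep (Lam s) (Lam s').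

Definition hstar := clos_refl_trans term hstep.

CoInductive infN : term -> term -> Prop :=
| infN_bot t : ~ has_hnf t -> infN t (Cst bot)
| infN_hnf t n a ts ts' :
    is_atom a -> a <> Cst bot ->
    hstar t (lams n (apps a ts)) ->
    length ts = length ts' ->
    (forall i, i < length ts -> infN (nth i ts (Cst bot)) (nth i ts' (Cst bot))) ->
    infN t (lams n (apps a ts')).

End InfLambda.

Arguments Var {C} _.
Arguments Cst {C} _.

(* A term either head-reduces to a head normal form or has no head normal form
   at all.  This is a standardization theorem: a beta-reduction t ->> u can be
   replayed as a coinductive standard reduction (weak-head reduce t to the head
   constructor of u, then continue in the subterms), and if u is a head normal
   form the first layers of this standard reduction are a head reduction of t
   to a head normal form.  Since the substitution laws of infinite terms only
   hold up to bisimilarity, all weak-head reductions are taken modulo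
   bisimilarity, which is removed at the end because bisimilarity can be pushed
   through head steps.  Choosing classically such a head reduction for every
   term then defines the normal form corecursively. *)
From Stdlib Require Import List Relations Arith Lia ClassicalEpsilon.
Import ListNotations.
Set Implicit Arguments.

Lemma clos_rt_map (A B : Type) (R : relation A) (S : relation B) (f : A -> B) :
  (forall x y, R x y -> clos_refl_trans B S (f x) (f y)) ->
  forall x y, clos_refl_trans A R x y -> clos_refl_trans B S (f x) (f y).
Proof.
  intros hR x y h; induction h.
  - now apply hR.
  - apply rt_refl.
  - eapply rt_trans; eassumption.
Qed.

Section InfiniteNormalForm.

Variable C : Type.
Notation term := (term C).
Implicit Types (a b t u : term) (s r : nat -> term).

Definition frob t : term :=
  match t with Var n => Var n | Cst c => Cst c | App a b => App a b | Lam a => Lam a end.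

Lemma frob_eq t : t = frob t.
Proof. now destruct t. Qed.

Definition bump k n := if k <=? n then S n else n.

Lemma bump_S k n : bump (S k) (S n) = S (bump k n).
Proof. unfold bump; simpl; now destruct (k <=? n). Qed.

Lemma bump_bump j k n : j <= k -> bump j (bump k n) = bump (S k) (bump j n).
Proof.
  intro hjk; unfold bump.
  destruct (Nat.leb_spec k n), (Nat.leb_spec j n);
    repeat match goal with |- context [?x <=? ?y] => destruct (Nat.leb_spec x y) end; lia.
Qed.

Lemma lift_var k n : lift k (@Var C n) = Var (bump k n).
Proof. now rewrite (frob_eq (lift k _)). Qed.
Lemma lift_cst k c : lift k (@Cst C c) = Cst c.
Proof. now rewrite (frob_eq (lift k _)). Qed.
Lemma lift_app k a b : lift k (App a b) = App (lift k a) (lift k b).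
Proof. now rewrite (frob_eq (lift k _)). Qed.
Lemma lift_lam k a : lift k (Lam a) = Lam (lift (S k) a).
Proof. now rewrite (frob_eq (lift k _)). Qed.
Lemma subst_var s n : subst s (@Var C n) = s n.
Proof. rewrite (frob_eq (subst s _)); simpl; now destruct (s n). Qed.
Lemma subst_cst s c : subst s (@Cst C c) = Cst c.
Proof. now rewrite (frob_eq (subst s _)). Qed.
Lemma subst_app s a b : subst s (App a b) = App (subst s a) (subst s b).
Proof. now rewrite (frob_eq (subst s _)). Qed.
Lemma subst_lam s a : subst s (Lam a) = Lam (subst (up s) a).
Proof. now rewrite (frob_eq (subst s _)). Qed.

CoInductive bisim : term -> term -> Prop :=
| bisim_var n : bisim (Var n) (Var n)
| bisim_cst c : bisim (Cst c) (Cst c)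
| bisim_app a b a' b' : bisim a a' -> bisim b b' -> bisim (App a b) (App a' b')
| bisim_lam a a' : bisim a a' -> bisim (Lam a) (Lam a').

Lemma bisim_refl : forall t, bisim t t.
Proof. cofix IH; intros []; constructor; apply IH. Qed.

Lemma bisim_sym : forall a b, bisim a b -> bisim b a.
Proof. cofix IH; intros a b []; constructor; now apply IH. Qed.

Lemma bisim_trans : forall a b t, bisim a b -> bisim b t -> bisim a t.
Proof.
  cofix IH; intros a b t h1 h2; destruct h1; inversion h2; subst; constructor;
    eapply IH; eassumption.
Qed.

Lemma lift_bisim : forall a b k, bisim a b -> bisim (lift k a) (lift k b).
Proof.
  cofix IH; intros a b k []; rewrite ?lift_var, ?lift_cst, ?lift_app, ?lift_lam;
    constructor; now apply IH.
Qed.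

Lemma subst_bisim : forall a b s r,
  bisim a b -> (forall n, bisim (s n) (r n)) -> bisim (subst s a) (subst r b).
Proof.
  cofix IH; intros a b s r h hsr; destruct h;
    rewrite ?subst_var, ?subst_cst, ?subst_app, ?subst_lam; try constructor; auto.
  apply IH; [assumption |]; intros [|n]; [apply bisim_refl | now apply lift_bisim].
Qed.

Lemma lift_lift : forall t j k, j <= k ->
  bisim (lift j (lift k t)) (lift (S k) (lift j t)).
Proof.
  cofix IH; intros [n | c | a b | a] j k hjk;
    rewrite ?lift_var, ?lift_cst, ?lift_app, ?lift_lam.
  - rewrite bump_bump by exact hjk; apply bisim_refl.
  - constructor.
  - constructor; now apply IH.
  - constructor; apply IH; lia.
Qed.

Lemma lift_as_subst : forall t k s, (forall n, bisim (s n) (Var (bump k n))) ->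
  bisim (lift k t) (subst s t).
Proof.
  cofix IH; intros [n | c | a b | a] k s hs;
    rewrite ?lift_var, ?lift_cst, ?lift_app, ?lift_lam,
            ?subst_var, ?subst_cst, ?subst_app, ?subst_lam.
  - now apply bisim_sym.
  - constructor.
  - constructor; now apply IH.
  - constructor; apply IH; intros [|n]; [apply bisim_refl |]; simpl.
    rewrite bump_S, <- (lift_var 0); now apply lift_bisim.
Qed.

Lemma subst_lift : forall t k s r, (forall n, bisim (r (bump k n)) (lift k (s n))) ->
  bisim (subst r (lift k t)) (lift k (subst s t)).
Proof.
  cofix IH; intros [n | c | a b | a] k s r hsr;
    rewrite ?lift_var, ?lift_cst, ?lift_app, ?lift_lam,
            ?subst_var, ?subst_cst, ?subst_app, ?subst_lam, ?lift_cst, ?lift_app, ?lift_lam.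
  - apply hsr.
  - constructor.
  - constructor; now apply IH.
  - constructor; apply IH; intros [|n]; simpl.
    + rewrite lift_var; apply bisim_refl.
    + rewrite bump_S; simpl.
      eapply bisim_trans; [apply lift_bisim, hsr | apply lift_lift; lia].
Qed.

Lemma subst_lift_cancel : forall t k s r, (forall n, bisim (s (bump k n)) (r n)) ->
  bisim (subst s (lift k t)) (subst r t).
Proof.
  cofix IH; intros [n | c | a b | a] k s r hsr;
    rewrite ?lift_var, ?lift_cst, ?lift_app, ?lift_lam,
            ?subst_var, ?subst_cst, ?subst_app, ?subst_lam.
  - apply hsr.
  - constructor.
  - constructor; now apply IH.
  - constructor; apply IH; intros [|n]; simpl; [apply bisim_refl |].
    rewrite bump_S; now apply lift_bisim.
Qed.

Lemma subst_subst : forall t s q r, (forall n, bisim (subst s (q n)) (r n)) ->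
  bisim (subst s (subst q t)) (subst r t).
Proof.
  cofix IH; intros [n | c | a b | a] s q r hsqr;
    rewrite ?subst_var, ?subst_cst, ?subst_app, ?subst_lam.
  - apply hsqr.
  - constructor.
  - constructor; now apply IH.
  - constructor; apply IH; intros [|n]; simpl.
    + rewrite subst_var; apply bisim_refl.
    + eapply bisim_trans; [apply subst_lift with (s := s); intro; apply bisim_refl |].
      now apply lift_bisim.
Qed.

Lemma subst_var_id : forall t s, (forall n, bisim (s n) (Var n)) -> bisim (subst s t) t.
Proof.
  cofix IH; intros [n | c | a b | a] s hs;
    rewrite ?subst_var, ?subst_cst, ?subst_app, ?subst_lam.
  - apply hs.
  - constructor.
  - constructor; now apply IH.
  - constructor; apply IH; intros [|n]; simpl; [apply bisim_refl |].
    rewrite <- (lift_var 0); now apply lift_bisim.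
Qed.

Definition scons0 u : nat -> term := fun n => match n with 0 => u | S m => Var m end.

Lemma subst_subst0 s u t :
  bisim (subst s (subst0 u t)) (subst0 (subst s u) (subst (up s) t)).
Proof.
  unfold subst0.
  eapply bisim_trans.
  { apply subst_subst with (r := fun n => subst s (scons0 u n)); intro; apply bisim_refl. }
  apply bisim_sym; eapply bisim_trans.
  { apply subst_subst with (r := fun n => subst (scons0 (subst s u)) (up s n)).
    intro; apply bisim_refl. }
  apply subst_bisim; [apply bisim_refl |]; intros [|n]; simpl; rewrite subst_var;
    [apply bisim_refl |].
  eapply bisim_trans.
  - apply subst_lift_cancel with (r := @Var C); intro; apply bisim_refl.
  - apply subst_var_id; intro; apply bisim_refl.
Qed.

Definition wred := clos_refl_trans term (fun a b => wstep a b \/ bisim a b).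

Lemma bisim_wred a b : bisim a b -> wred a b.
Proof. intro h; now apply rt_step; right. Qed.

Lemma wstep_subst a b s : wstep a b -> exists t, wstep (subst s a) t /\ bisim t (subst s b).
Proof.
  intro h; induction h; rewrite ?subst_app, ?subst_lam.
  - eexists; split; [constructor | apply bisim_sym, subst_subst0].
  - destruct IHh as [t [h1 h2]]; eexists; split; [apply wstep_app; exact h1 |].
    constructor; [assumption | apply bisim_refl].
Qed.

Lemma wred_subst a b s : wred a b -> wred (subst s a) (subst s b).
Proof.
  apply clos_rt_map with (f := subst s); intros x y [h | h].
  - destruct (wstep_subst s h) as [t [h1 h2]].
    eapply rt_trans; [apply rt_step; left; exact h1 | now apply bisim_wred].
  - apply bisim_wred, subst_bisim; [assumption | intro; apply bisim_refl].
Qed.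

Lemma wred_lift a b k : wred a b -> wred (lift k a) (lift k b).
Proof.
  intro h.
  assert (hren : forall t, bisim (lift k t) (subst (fun n => Var (bump k n)) t))
    by (intro; apply lift_as_subst; intro; apply bisim_refl).
  eapply rt_trans; [apply bisim_wred, hren |].
  eapply rt_trans; [apply wred_subst, h |].
  apply bisim_wred, bisim_sym, hren.
Qed.

Lemma wred_appl a b u : wred a b -> wred (App a u) (App b u).
Proof.
  apply clos_rt_map with (f := fun t => App t u); intros x y [h | h]; apply rt_step.
  - left; now constructor.
  - right; constructor; [assumption | apply bisim_refl].
Qed.

CoInductive stdred : term -> term -> Prop :=
| stdred_var t n : wred t (Var n) -> stdred t (Var n)
| stdred_cst t c : wred t (Cst c) -> stdred t (Cst c)
| stdred_app t a b a' b' :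
    wred t (App a b) -> stdred a a' -> stdred b b' -> stdred t (App a' b')
| stdred_lam t a a' : wred t (Lam a) -> stdred a a' -> stdred t (Lam a').

Lemma stdred_refl : forall t, stdred t t.
Proof. cofix IH; intros []; econstructor; try apply rt_refl; apply IH. Qed.

Lemma wred_stdred t t' u : wred t t' -> stdred t' u -> stdred t u.
Proof.
  intros h1 h2; destruct h2 as [t2 n h | t2 c h | t2 a b a' b' h ha hb | t2 a a' h ha];
    [apply stdred_var | apply stdred_cst | apply stdred_app with a b | apply stdred_lam with a];
    try (eapply rt_trans; eassumption); assumption.
Qed.

Lemma stdred_lift : forall a b k, stdred a b -> stdred (lift k a) (lift k b).
Proof.
  cofix IH; intros t u k h;
    destruct h as [t n h | t c h | t a b a' b' h ha hb | t a a' h ha];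
    rewrite ?lift_var, ?lift_cst, ?lift_app, ?lift_lam.
  - constructor; rewrite <- lift_var; now apply wred_lift.
  - constructor; rewrite <- (lift_cst k); now apply wred_lift.
  - apply stdred_app with (lift k a) (lift k b); [| now apply IH ..].
    rewrite <- lift_app; now apply wred_lift.
  - apply stdred_lam with (lift (S k) a); [| now apply IH].
    rewrite <- lift_lam; now apply wred_lift.
Qed.

Lemma stdred_subst : forall a b s r,
  stdred a b -> (forall n, stdred (s n) (r n)) -> stdred (subst s a) (subst r b).
Proof.
  cofix IH; intros t u s r h hsr;
    destruct h as [t n h | t c h | t a b a' b' h ha hb | t a a' h ha];
    rewrite ?subst_var, ?subst_cst, ?subst_app, ?subst_lam.
  - apply wred_stdred with (subst s (Var n)); [now apply wred_subst |].
    rewrite subst_var; apply hsr.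
  - constructor; rewrite <- (subst_cst s); now apply wred_subst.
  - apply stdred_app with (subst s a) (subst s b); [| now apply IH ..].
    rewrite <- subst_app; now apply wred_subst.
  - apply stdred_lam with (subst (up s) a).
    + rewrite <- subst_lam; now apply wred_subst.
    + apply IH; [assumption |]; intros [|n]; [apply stdred_refl | now apply stdred_lift].
Qed.

Lemma stdred_beta u v : beta u v -> forall t, stdred t u -> stdred t v.
Proof.
  induction 1 as [a u | a a' u _ IH | a u u' _ IH | a a' _ IH]; intros t h;
    inversion h as [| | ? f x f' x' hf hff hxx | ? f f' hf hff]; subst.
  - inversion hff as [| | | ? g g' hg hgg]; subst.
    apply wred_stdred with (subst0 x g).
    + eapply rt_trans; [exact hf |]; eapply rt_trans; [apply wred_appl; exact hg |].
      apply rt_step; left; constructor.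
    + apply stdred_subst; [assumption |]; intros [|n]; [assumption | apply stdred_refl].
  - eapply stdred_app; eauto.
  - eapply stdred_app; eauto.
  - eapply stdred_lam; eauto.
Qed.

Lemma beta_star_stdred t u : beta_star t u -> stdred t u.
Proof.
  intro h; apply clos_rt_rtn1_iff in h; induction h.
  - apply stdred_refl.
  - eapply stdred_beta; eassumption.
Qed.

Variable bot : C.

Definition hred := clos_refl_trans term (fun a b => hstep a b \/ bisim a b).

Lemma wred_hred a b : wred a b -> hred a b.
Proof.
  apply clos_rt_map with (f := fun t => t); intros x y [h | h]; apply rt_step;
    [left; now constructor | now right].
Qed.

Lemma hred_lam a b : hred a b -> hred (Lam a) (Lam b).
Proof.
  apply clos_rt_map with (f := @Lam C); intros x y [h | h]; apply rt_step;
    [left; now constructor | right; now constructor].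
Qed.

Lemma apps_snoc a ts b : apps a (ts ++ [b]) = App (apps a ts) b.
Proof. revert a; induction ts; simpl; auto. Qed.

Lemma stdred_spine u : spine bot u -> forall t, stdred t u ->
  exists a ts, is_atom a /\ a <> Cst bot /\ wred t (apps a ts).
Proof.
  induction 1 as [n | c hc | f x _ IH]; intros t h.
  - inversion h; subst; exists (Var n), []; repeat split; [discriminate | assumption].
  - inversion h; subst; exists (Cst c), []; repeat split; [congruence | assumption].
  - inversion h as [| | ? g y f' x' hw hg hy |]; subst.
    destruct (IH _ hg) as [a [ts [ha [hb hw']]]].
    exists a, (ts ++ [y]); repeat split; auto.
    rewrite apps_snoc; eapply rt_trans; [exact hw | apply wred_appl; exact hw'].
Qed.

Lemma stdred_hnf u : hnf bot u -> forall t, stdred t u ->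
  exists n a ts, is_atom a /\ a <> Cst bot /\ hred t (lams n (apps a ts)).
Proof.
  induction 1 as [u hu | u _ IH]; intros t h.
  - destruct (stdred_spine hu h) as [a [ts [ha [hb hw]]]].
    exists 0, a, ts; repeat split; auto; now apply wred_hred.
  - inversion h as [| | | ? a u' hw hau]; subst.
    destruct (IH _ hau) as [n [b [ts [hb [hbot hr]]]]].
    exists (S n), b, ts; repeat split; auto; simpl.
    eapply rt_trans; [apply wred_hred; exact hw | now apply hred_lam].
Qed.

Lemma bisim_wstep a b u : bisim a b -> wstep b u -> exists t, wstep a t /\ bisim t u.
Proof.
  intros hab h; revert a hab; induction h; intros t hab.
  - inversion hab as [| | f x f' x' hf hx |]; subst; inversion hf; subst.
    eexists; split; [constructor |].
    apply subst_bisim; [assumption |]; intros [|n]; [assumption | apply bisim_refl].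
  - inversion hab as [| | f x f' x' hf hx |]; subst.
    destruct (IHh _ hf) as [g [h1 h2]].
    exists (App g x); split; [now apply wstep_app | now constructor].
Qed.

Lemma bisim_hstep a b u : bisim a b -> hstep b u -> exists t, hstep a t /\ bisim t u.
Proof.
  intros hab h; revert a hab; induction h as [b u h | b u _ IH]; intros t hab.
  - destruct (bisim_wstep hab h) as [t' [h1 h2]]; exists t'; split; auto; now constructor.
  - inversion hab as [| | | ? ? hb]; subst.
    destruct (IH _ hb) as [t' [h1 h2]].
    exists (Lam t'); split; [now apply hstep_lam | now constructor].
Qed.

Lemma bisim_hstar a b u : hstar b u -> bisim a b -> exists t, hstar a t /\ bisim t u.
Proof.
  intro h; apply clos_rt_rt1n_iff in h; revert a; induction h as [| b b' u hb _ IH];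
    intros a hab.
  - exists a; split; [apply rt_refl | assumption].
  - destruct (bisim_hstep hab hb) as [t [h1 h2]]; destruct (IH _ h2) as [t' [h3 h4]].
    exists t'; split; [eapply rt_trans; [apply rt_step |]; eassumption | assumption].
Qed.

Lemma hred_hstar a b : hred a b -> exists t, hstar a t /\ bisim t b.
Proof.
  intro h; apply clos_rt_rt1n_iff in h; induction h as [a | a a' b [hs | hb] _ IH].
  - exists a; split; [apply rt_refl | apply bisim_refl].
  - destruct IH as [t [h1 h2]]; exists t; split; [|assumption].
    eapply rt_trans; [apply rt_step |]; eassumption.
  - destruct IH as [t [h1 h2]]; destruct (bisim_hstar h1 hb) as [t' [h3 h4]].
    exists t'; split; [assumption | eapply bisim_trans; eassumption].
Qed.

Lemma bisim_apps : forall ts a t, bisim t (apps a ts) ->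
  exists a' ts', t = apps a' ts' /\ bisim a' a.
Proof.
  induction ts as [| u ts IH]; intros a t h; simpl in h.
  - now exists t, [].
  - destruct (IH _ _ h) as [f [ts' [-> hf]]]; inversion hf; subst.
    eexists _, (_ :: ts'); simpl; eauto.
Qed.

Lemma bisim_lams_apps n a ts t : is_atom a -> bisim t (lams n (apps a ts)) ->
  exists ts', t = lams n (apps a ts').
Proof.
  intro ha; revert t; induction n as [| n IH]; intros t h; simpl in *.
  - destruct (bisim_apps _ _ h) as [a' [ts' [-> hb]]]; exists ts'.
    destruct a; try contradiction; now inversion hb.
  - inversion h as [| | | t' ? h']; subst.
    destruct (IH _ h') as [ts' ->]; now exists ts'.
Qed.

Definition head_normalizes t (p : nat * term * list term) : Prop :=
  let '(n, a, ts) := p in is_atom a /\ a <> Cst bot /\ hstar t (lams n (apps a ts)).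

Lemma has_hnf_head_normalizes t : has_hnf bot t -> exists p, head_normalizes t p.
Proof.
  intros [u [hbeta hu]].
  destruct (stdred_hnf hu (beta_star_stdred hbeta)) as [n [a [ts [ha [hbot hr]]]]].
  destruct (hred_hstar hr) as [t' [hs hb]].
  destruct (bisim_lams_apps _ _ _ ha hb) as [ts' ->].
  now exists (n, a, ts').
Qed.

Definition head_normalization t : {p | head_normalizes t p} + {~ has_hnf bot t}.
Proof.
  destruct (excluded_middle_informative (exists p, head_normalizes t p)) as [h | h].
  - left; exact (constructive_indefinite_description _ h).
  - right; intro hh; exact (h (has_hnf_head_normalizes hh)).
Defined.

Inductive node (X : Type) : Type :=
| Leaf : term -> node X
| Node_app : X -> X -> node X
| Node_lam : X -> node X.

CoFixpoint unfold_term (X : Type) (step : X -> node X) (x : X) : term :=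
  match step x with
  | Leaf _ t => t
  | Node_app y z => App (unfold_term step y) (unfold_term step z)
  | Node_lam y => Lam (unfold_term step y)
  end.

Lemma unfold_term_eq (X : Type) (step : X -> node X) x :
  unfold_term step x =
  match step x with
  | Leaf _ t => t
  | Node_app y z => App (unfold_term step y) (unfold_term step z)
  | Node_lam y => Lam (unfold_term step y)
  end.
Proof. rewrite (frob_eq (unfold_term step x)); simpl; now destruct (step x) as [[]| |]. Qed.

(* [Spine m a rargs] stands for [lams m (apps a (rev rargs))], the arguments
   still to be normalized. *)
Inductive bohm_state : Type :=
| Root : term -> bohm_state
| Spine : nat -> term -> list term -> bohm_state.

Definition spine_step m a rargs : node bohm_state :=
  match m, rargs with
  | S m', _ => Node_lam (Spine m' a rargs)
  | 0, [] => Leaf _ a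
  | 0, u :: us => Node_app (Spine 0 a us) (Root u)
  end.

Definition bohm_step (x : bohm_state) : node bohm_state :=
  match x with
  | Root t =>
      match head_normalization t with
      | inleft (exist _ (n, a, ts) _) => spine_step n a (rev ts)
      | inright _ => Leaf _ (Cst bot)
      end
  | Spine m a rargs => spine_step m a rargs
  end.

Definition bohm t := unfold_term bohm_step (Root t).

Lemma unfold_spine m a rargs :
  unfold_term bohm_step (Spine m a rargs) = lams m (apps a (rev (map bohm rargs))).
Proof.
  induction m as [| m IH].
  - induction rargs as [| u us IH]; rewrite unfold_term_eq; simpl; [reflexivity |].
    now rewrite IH, apps_snoc.
  - rewrite unfold_term_eq; simpl; now rewrite IH.
Qed.

Lemma bohm_eq t :
  bohm t = match head_normalization t with
           | inleft (exist _ (n, a, ts) _) => lams n (apps a (map bohm ts))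
           | inright _ => Cst bot
           end.
Proof.
  unfold bohm at 1; rewrite unfold_term_eq; simpl.
  destruct (head_normalization t) as [[[[n a] ts] _] | _]; [| reflexivity].
  transitivity (unfold_term bohm_step (Spine n a (rev ts))).
  - now rewrite (unfold_term_eq _ (Spine n a (rev ts))).
  - now rewrite unfold_spine, map_rev, rev_involutive.
Qed.

Lemma infN_bohm : forall t, infN bot t (bohm t).
Proof.
  cofix IH; intro t; rewrite bohm_eq.
  destruct (head_normalization t) as [[[[n a] ts] [ha [hbot hs]]] | hnone].
  - apply infN_hnf with (ts := ts); auto.
    + now rewrite length_map.
    + intros i hi.
      rewrite (nth_indep (map bohm ts) _ (bohm (Cst bot))) by now rewrite length_map.
      rewrite map_nth; apply IH.
  - now apply infN_bot.
Qed.

End InfiniteNormalForm.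

Theorem lemma5p37 (C : Type) (bot : C) (t : term C) :
  exists s : term C, infN bot t s.
Proof. exists (bohm bot t); apply infN_bohm. Qed.
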